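(* For every $n\geq 3$ and every prime power $q=p^h$, the minimum distance $d(C(PG(n,q))^\perp)$ equals $d(C(PG(2,q))^\perp)$.
   Context: $C(PG(m,q))$ is the $p$-ary code spanned over $\mathbb{F}_p$ by the incidence vectors of the hyperplanes of $PG(m,q)$, with coordinates indexed by points. For $m=2$ the hyperplanes are the lines. $C^\perp$ is the dual code with respect to the standard scalar product over $\mathbb{F}_p$. $d(\cdot)$ denotes minimum distance, i.e. minimum nonzero weight. *)

From HB Require Import structures.
From mathcomp Require Import all_boot all_order all_algebra.
Set Implicit Arguments. Unset Strict Implicit. Unset Printing Implicit Defensive.
Import GRing.Theory.
Local Open Scope ring_scope.

(* The projective space PG(m, F) over a finite field F (q = #|F|) is built
   on the vector space F^(m+1) = 'rV[F]_(m.+1). *)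

Definition is_point (F : finFieldType) (m : nat) (S : {set 'rV[F]_(m.+1)}) : bool :=
  [exists v : 'rV[F]_(m.+1), (v != 0) && (S == [set a *: v | a : F])].

Definition is_hyperplane (F : finFieldType) (m : nat) (S : {set 'rV[F]_(m.+1)}) : bool :=
  [exists u : 'rV[F]_(m.+1), (u != 0) && (S == [set x | (x *m u^T) == 0])].

Definition PGpoint (F : finFieldType) (m : nat) :=
  {S : {set 'rV[F]_(m.+1)} | is_point S}.
Definition PGhyperplane (F : finFieldType) (m : nat) :=
  {S : {set 'rV[F]_(m.+1)} | is_hyperplane S}.

Definition word (F : finFieldType) (m p : nat) := {ffun PGpoint F m -> 'F_p}.

Definition incvec (F : finFieldType) (m p : nat) (H : PGhyperplane F m) : word F m p :=
  [ffun P : PGpoint F m => if val P \subset val H then 1 else 0].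

Definition PGcode (F : finFieldType) (m p : nat) : {set word F m p} :=
  [set c : word F m p | [exists a : {ffun PGhyperplane F m -> 'F_p},
     c == [ffun P => \sum_(H : PGhyperplane F m) a H * incvec p H P]]].

Definition dotw (F : finFieldType) (m p : nat) (v w : word F m p) : 'F_p :=
  \sum_(P : PGpoint F m) v P * w P.

Definition PGdual (F : finFieldType) (m p : nat) : {set word F m p} :=
  [set v : word F m p | [forall c in PGcode F m p, dotw v c == 0]].

Definition wt (F : finFieldType) (m p : nat) (v : word F m p) : nat :=
  #|[set P | v P != 0]|.

(* minimum distance = minimum nonzero weight (convention: #points + 1 if
   the code has no nonzero word; never happens for the codes considered) *)
Definition mindist (F : finFieldType) (m p : nat) (S : {set word F m p}) : nat :=
  \big[minn/#|{: PGpoint F m}|.+1]_(c in S | c != 0) wt c.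

(* Homogeneous coordinates turn a word c on the points of PG(m,q) into a
   function g on F^(m+1) that is invariant under nonzero scalings and vanishes
   at 0 ("homogeneous"); c is in the dual code iff the sum of g over every
   hyperplane through the origin vanishes ("balanced"), and the support of g
   is (q-1) times the weight of c.  Two operations on such functions drive
   an induction on the dimension:
   - extension by zero off a coordinate hyperplane maps balanced functions on
     F^k to balanced functions on F^(k+1) with the same support, so
     d(PG(m+1)) <= d(PG(m));
   - summation along the lines with a fixed direction r maps balanced
     functions on F^(k+1) to balanced functions on F^k without enlarging the
     support; when the support is small there is a direction r for which the
     projection of a nonzero g stays nonzero, so d(PG(m)) <= d(PG(m+1)).
   Since the support of a minimum word of PG(m+1) is at most that of a
   minimum word of PG(m), which misses 0, the second step always applies.
   An explicit nonzero dual word of PG(2,q) starts the induction on n.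
   All counting arguments use that F-vector spaces of positive dimension have
   cardinality 0 in F_p. *)

From HB Require Import structures.
From mathcomp Require Import all_boot all_order all_algebra all_field zify.
Set Implicit Arguments. Unset Strict Implicit. Unset Printing Implicit Defensive.
Import GRing.Theory.
Local Open Scope ring_scope.

Section CountingModP.
Variables (F : finFieldType) (p : nat).
Hypothesis pcharF : p \in [pchar F].

Lemma card_finField_Fp : (#|F|%:R : 'F_p) = 0.
Proof.
have oF : #|F| = (p ^ logn p #|F|)%N := card_pprimeChar pcharF.
have logF_gt0 : (0 < logn p #|F|)%N.
  by rewrite lt0n; apply: contraTneq (finNzRing_gt1 F) => e0; rewrite oF e0.
by rewrite oF natrX pchar_Fp_0 ?(pcharf_prime pcharF) // expr0n eqn0Ngt logF_gt0.
Qed.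

Lemma card_finField_pred_Fp : (#|F|.-1%:R : 'F_p) = -1.
Proof.
apply/eqP; rewrite -addr_eq0 natr1 prednK ?card_finField_Fp //.
exact: ltnW (finNzRing_gt1 F).
Qed.

(* A system of l < k linear equations in k unknowns has q^d solutions with
   d > 0, a number that vanishes in F_p. *)
Lemma card_kernel_Fp k l (M : 'M[F]_(k, l)) : (l < k)%N ->
  (#|[set x : 'rV[F]_k | x *m M == 0]|%:R : 'F_p) = 0.
Proof.
move=> lt_lk; pose f : 'Hom('rV[F]_k, 'rV[F]_l) := linfun (mulmxr M).
have -> : #|[set x : 'rV[F]_k | x *m M == 0]| = #|lker f|.
  by apply: eq_card => x; rewrite inE memv_ker lfunE.
have dim_ker : (0 < \dim (lker f))%N.
  have := limg_ker_dim f fullv; rewrite capfv !dimvf /dim /= !mul1n => dimE.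
  have := dimvS (subvf (f @: fullv)); rewrite dimvf /dim /= mul1n.
  lia.
by rewrite card_vspace natrX card_finField_Fp expr0n eqn0Ngt dim_ker.
Qed.

End CountingModP.

Section Coordinates.
Variable R : comNzRingType.

Definition dot k (x u : 'rV[R]_k) : R := \sum_j x 0 j * u 0 j.

(* Deleting coordinate i, and inserting a value c as coordinate i: the
   hyperplane x_i = 0 of R^(k+1) is identified with R^k by dropv/insv. *)
Definition dropv k (i : 'I_k.+1) (x : 'rV[R]_k.+1) : 'rV[R]_k :=
  \row_j x 0 (lift i j).
Definition insv k (i : 'I_k.+1) (y : 'rV[R]_k) (c : R) : 'rV[R]_k.+1 :=
  \row_j (if unlift i j is Some j' then y 0 j' else c).

Lemma insv_i k i (y : 'rV[R]_k) c : insv i y c 0 i = c.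
Proof. by rewrite mxE unlift_none. Qed.

Lemma insvK k i (y : 'rV[R]_k) c : dropv i (insv i y c) = y.
Proof. by apply/rowP => j; rewrite !mxE liftK. Qed.

Lemma dropvK k i (x : 'rV[R]_k.+1) : insv i (dropv i x) (x 0 i) = x.
Proof. by apply/rowP => j; rewrite mxE; case: unliftP => [j'|] ->; rewrite ?mxE. Qed.

Lemma insvD k i (y y' : 'rV[R]_k) c c' :
  insv i y c + insv i y' c' = insv i (y + y') (c + c').
Proof. by apply/rowP => j; rewrite !mxE; case: unliftP => [j'|] _; rewrite ?mxE. Qed.

Lemma insvZ k i (y : 'rV[R]_k) c a : a *: insv i y c = insv i (a *: y) (a * c).
Proof. by apply/rowP => j; rewrite !mxE; case: unliftP => [j'|] _; rewrite ?mxE. Qed.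

Lemma insv0 k i : insv i (0 : 'rV[R]_k) 0 = 0.
Proof. by apply/rowP => j; rewrite !mxE; case: unliftP => [j'|] _; rewrite ?mxE. Qed.

Lemma dropvZ k i (x : 'rV[R]_k.+1) a : dropv i (a *: x) = a *: dropv i x.
Proof. by apply/rowP => j; rewrite !mxE. Qed.

Lemma dropv0 k i : dropv i (0 : 'rV[R]_k.+1) = 0.
Proof. by apply/rowP => j; rewrite !mxE. Qed.

Lemma nz_coord k (x : 'rV[R]_k) : x != 0 -> exists j, x 0 j != 0.
Proof.
move=> nz_x; apply/existsP; apply: contraNT nz_x; rewrite negb_exists.
by move=> /forallP x0; apply/eqP/rowP => j; rewrite mxE; apply/eqP/negPn.
Qed.

Lemma dot_mx k (x u : 'rV[R]_k) : (x *m u^T == 0) = (dot x u == 0).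
Proof.
have -> : dot x u = (x *m u^T) 0 0 by rewrite mxE; apply: eq_bigr => j _; rewrite mxE.
by apply/eqP/eqP => [-> | x_u]; rewrite ?mxE //; apply/rowP => j; rewrite ord1 x_u mxE.
Qed.

Lemma dotC k (x u : 'rV[R]_k) : dot x u = dot u x.
Proof. by apply: eq_bigr => j _; rewrite mulrC. Qed.

Lemma dotZl k (x u : 'rV[R]_k) a : dot (a *: x) u = a * dot x u.
Proof. by rewrite /dot mulr_sumr; apply: eq_bigr => j _; rewrite mxE mulrA. Qed.

Lemma dotDl k (x y u : 'rV[R]_k) : dot (x + y) u = dot x u + dot y u.
Proof. by rewrite /dot -big_split; apply: eq_bigr => j _; rewrite mxE mulrDl. Qed.

Lemma dot0l k (u : 'rV[R]_k) : dot 0 u = 0.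
Proof. by rewrite /dot big1 // => j _; rewrite mxE mul0r. Qed.

Lemma dot0r k (x : 'rV[R]_k) : dot x 0 = 0.
Proof. by rewrite dotC dot0l. Qed.

Lemma dot_split k i (x u : 'rV[R]_k.+1) :
  dot x u = x 0 i * u 0 i + dot (dropv i x) (dropv i u).
Proof.
by rewrite /dot (bigD1_ord i) //=; congr (_ + _); apply: eq_bigr => j _; rewrite !mxE.
Qed.

Lemma dot_insv k i (y u : 'rV[R]_k) c c' :
  dot (insv i y c) (insv i u c') = c * c' + dot y u.
Proof. by rewrite (dot_split i) !insv_i !insvK. Qed.

End Coordinates.

Section FiniteSums.
Variable F : finFieldType.

Lemma sum_insv (V : nmodType) k i (h : 'rV[F]_k.+1 -> V) :
  \sum_(x : 'rV[F]_k.+1) h x = \sum_(c : F) \sum_(y : 'rV[F]_k) h (insv i y c).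
Proof.
rewrite pair_big /= (reindex (fun cy : F * 'rV[F]_k => insv i cy.2 cy.1)) //=.
exists (fun x : 'rV[F]_k.+1 => (x 0 i, dropv i x)) => [[c y] _ | x _] /=.
  by rewrite insv_i insvK.
by rewrite dropvK.
Qed.

Lemma sum_along (V : nmodType) k i (r : 'rV[F]_k.+1) (h : 'rV[F]_k.+1 -> V) :
  r 0 i != 0 ->
  \sum_(x : 'rV[F]_k.+1) h x = \sum_(y : 'rV[F]_k) \sum_(t : F) h (insv i y 0 + t *: r).
Proof.
move=> nz_ri; rewrite (sum_insv i) [RHS]exchange_big /= (reindex_inj (mulIf nz_ri)) /=.
apply: eq_bigr => t _; rewrite (reindex_inj (addIr (t *: dropv i r))) /=.
apply: eq_bigr => y _; congr h.
by rewrite -[in RHS](dropvK i r) insvZ insvD add0r.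
Qed.

Lemma insv_along k i (y : 'rV[F]_k) t (r : 'rV[F]_k.+1) :
  (insv i y 0 + t *: r) 0 i = t * r 0 i.
Proof. by rewrite !mxE unlift_none add0r. Qed.

Lemma insv_dropv_base k i (x r : 'rV[F]_k.+1) : r 0 i != 0 ->
  insv i (dropv i (x - (x 0 i / r 0 i) *: r)) 0 = x - (x 0 i / r 0 i) *: r.
Proof.
by move=> nz_ri; rewrite -[RHS](dropvK i) !mxE divfK // subrr.
Qed.

Variable p : nat.
Hypothesis pcharF : p \in [pchar F].

Lemma card_hyperplane_Fp k (x : 'rV[F]_k) : (1 < k)%N ->
  (#|[set u : 'rV[F]_k | dot u x == 0]|%:R : 'F_p) = 0.
Proof.
move=> k_gt1; rewrite -(card_kernel_Fp pcharF (x^T)) //.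
by congr (_%:R); apply: eq_card => u; rewrite !inE dot_mx.
Qed.

Lemma card_hyperplane_coord_Fp k (u : 'rV[F]_k) j : (2 < k)%N ->
  (#|[set x : 'rV[F]_k | (dot x u == 0) && (x 0 j == 0)]|%:R : 'F_p) = 0.
Proof.
move=> k_gt2; pose M : 'M_(k, 1 + 1) := row_mx u^T (delta_mx 0 j)^T.
rewrite -(card_kernel_Fp pcharF M) //.
congr (_%:R); apply: eq_card => x; rewrite !inE mul_mx_row row_mx_eq0 !dot_mx.
congr (_ && _); rewrite /dot (bigD1 j) //= mxE !eqxx mulr1 big1 ?addr0 // => l ne_lj.
by rewrite mxE (negbTE ne_lj) mulr0.
Qed.

End FiniteSums.

Section BalancedFunctions.
Variables (F : finFieldType) (p : nat).
Hypothesis pcharF : p \in [pchar F].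

(* Functions on F^k coming from functions on the points of PG(k-1,q). *)
Definition homogeneous k (g : 'rV[F]_k -> 'F_p) :=
  (forall a x, a != 0 -> g (a *: x) = g x) /\ g 0 = 0.

Definition balanced k (g : 'rV[F]_k -> 'F_p) :=
  forall u : 'rV[F]_k, u != 0 -> \sum_(x | dot x u == 0) g x = 0.

Definition supp k (g : 'rV[F]_k -> 'F_p) := [set x | g x != 0].

Lemma card_orth_nz_Fp k (x : 'rV[F]_k) : (1 < k)%N -> x != 0 ->
  (#|[set u | (u != 0) && (dot x u == 0)]|%:R : 'F_p) = -1.
Proof.
move=> k_gt1 nz_x; apply/eqP; rewrite -addr_eq0 natr1.
rewrite -(card_hyperplane_Fp pcharF x k_gt1) [#|[set u | dot u x == 0]|](cardsD1 0).
rewrite !inE dot0l eqxx add1n; apply/eqP; congr (_.+1%:R).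
by apply: eq_card => u; rewrite !inE dotC.
Qed.

(* Double counting of the incidences (x, u^perp): a balanced homogeneous
   function on F^k, k >= 2, has total sum 0. *)
Lemma sum_balanced k (g : 'rV[F]_k -> 'F_p) : (1 < k)%N ->
  homogeneous g -> balanced g -> \sum_x g x = 0.
Proof.
move=> k_gt1 [_ g0] bal_g; apply/eqP; rewrite -oppr_eq0 -sumrN; apply/eqP.
transitivity (\sum_(u | u != 0) \sum_(x | dot x u == 0) g x); last exact: big1.
rewrite (exchange_big_dep xpredT) //=; apply: eq_bigr => x _.
have [-> | nz_x] := eqVneq x 0; first by rewrite g0 oppr0 big1.
rewrite sumr_const -mulr_natr -cardsE (card_orth_nz_Fp k_gt1 nz_x).
by rewrite mulrN1.
Qed.

Definition ext k (i : 'I_k.+1) (g : 'rV[F]_k -> 'F_p) (x : 'rV[F]_k.+1) : 'F_p :=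
  if x 0 i == 0 then g (dropv i x) else 0.

Lemma ext_homogeneous k i (g : 'rV[F]_k -> 'F_p) :
  homogeneous g -> homogeneous (ext i g).
Proof.
move=> [gZ g0]; split => [a x nz_a|]; rewrite /ext.
  by rewrite mxE mulf_eq0 (negbTE nz_a) dropvZ gZ.
by rewrite mxE eqxx dropv0.
Qed.

(* A hyperplane u^perp of F^(k+1) meets x_i = 0 in the hyperplane
   (dropv i u)^perp of F^k, or in all of F^k when u is a multiple of e_i;
   the latter case is where k >= 2 and sum_balanced are needed. *)
Lemma ext_balanced k i (g : 'rV[F]_k -> 'F_p) : (1 < k)%N ->
  homogeneous g -> balanced g -> balanced (ext i g).
Proof.
move=> k_gt1 hom_g bal_g u nz_u.
rewrite big_mkcond (sum_insv i) /= (bigD1 0) //= [X in _ + X]big1 ?addr0; last first.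
  by move=> c nz_c; apply: big1 => y _; rewrite /ext insv_i (negbTE nz_c); case: ifP.
rewrite -(dropvK i u) /ext.
under eq_bigr => y _ do rewrite dot_insv mul0r add0r insv_i eqxx insvK.
rewrite -big_mkcond /=.
have [-> | nz_u'] := eqVneq (dropv i u) 0; last exact: bal_g.
by under eq_bigl => y do rewrite dot0r eqxx; exact: sum_balanced.
Qed.

Lemma card_supp_ext k i (g : 'rV[F]_k -> 'F_p) : #|supp (ext i g)| = #|supp g|.
Proof.
have -> : supp (ext i g) = (fun y => insv i y 0) @: supp g.
  apply/setP => x; rewrite !inE /ext; apply/idP/imsetP.
    case: ifP => [/eqP x_i g_x|]; last by rewrite eqxx.
    by exists (dropv i x); rewrite ?inE // -x_i dropvK.
  by move=> [y]; rewrite inE => g_y ->; rewrite insv_i eqxx insvK.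
by apply: card_imset => y y' /(congr1 (dropv i)); rewrite !insvK.
Qed.

Definition proj k (i : 'I_k.+1) (r : 'rV[F]_k.+1) (g : 'rV[F]_k.+1 -> 'F_p)
    (y : 'rV[F]_k) : 'F_p :=
  \sum_(t : F) g (insv i y 0 + t *: r).

Lemma proj_homogeneous k i (r : 'rV[F]_k.+1) (g : 'rV[F]_k.+1 -> 'F_p) :
  homogeneous g -> g r = 0 -> homogeneous (proj i r g).
Proof.
move=> [gZ g0] g_r; split => [a y nz_a|]; rewrite /proj.
  rewrite [RHS](reindex_inj (mulIf (invr_neq0 nz_a))) /=.
  apply: eq_bigr => t _.
  by rewrite -[RHS](gZ a _ nz_a) scalerDr insvZ mulr0 scalerA mulrCA divff ?mulr1.
rewrite insv0 big1 // => t _; rewrite add0r.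
by have [-> | nz_t] := eqVneq t 0; rewrite ?scale0r ?gZ.
Qed.

(* Hyperplanes of F^(k+1) containing r are unions of lines of direction r; they
   correspond to the hyperplanes of F^k. *)
Lemma proj_hyperplane_sum k i (r u : 'rV[F]_k.+1) (g : 'rV[F]_k.+1 -> 'F_p) :
  r 0 i != 0 -> dot r u = 0 ->
  \sum_(y | dot y (dropv i u) == 0) proj i r g y = \sum_(x | dot x u == 0) g x.
Proof.
move=> nz_ri r_u; rewrite big_mkcond [RHS]big_mkcond (sum_along _ nz_ri) /=.
apply: eq_bigr => y _; rewrite /proj.
have dot_line t : dot (insv i y 0 + t *: r) u = dot y (dropv i u).
  by rewrite dotDl dotZl r_u mulr0 addr0 -[u in LHS](dropvK i) dot_insv mul0r add0r.
under [RHS]eq_bigr => t _ do rewrite dot_line.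
by case: (dot y _ == 0) => //; rewrite big1.
Qed.

Lemma proj_balanced k i (r : 'rV[F]_k.+1) (g : 'rV[F]_k.+1 -> 'F_p) :
  r 0 i != 0 -> balanced g -> balanced (proj i r g).
Proof.
move=> nz_ri bal_g u' nz_u'; set c := - dot (dropv i r) u' / r 0 i.
have nz_u : insv i u' c != 0.
  by apply: contraNneq nz_u' => u0; rewrite -(insvK i u' c) u0 dropv0.
have r_u : dot r (insv i u' c) = 0.
  by rewrite (dot_split i) insv_i insvK mulrC divfK // addNr.
by rewrite -[u'](insvK i u' c) proj_hyperplane_sum ?bal_g.
Qed.

(* The support of the projection is covered by the image of the support. *)
Lemma card_supp_proj k i (r : 'rV[F]_k.+1) (g : 'rV[F]_k.+1 -> 'F_p) :
  r 0 i != 0 -> (#|supp (proj i r g)| <= #|supp g|)%N.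
Proof.
move=> nz_ri.
pose base (x : 'rV[F]_k.+1) := dropv i (x - (x 0 i / r 0 i) *: r).
apply: (leq_trans _ (leq_imset_card base (supp g))).
apply/subset_leq_card/subsetP => y; rewrite inE => proj_y.
have [t g_t] : exists t, g (insv i y 0 + t *: r) != 0.
  apply/existsP; apply: contraNT proj_y; rewrite negb_exists => /forallP g0.
  by apply/eqP/big1 => t _; apply/eqP/negPn.
apply/imsetP; exists (insv i y 0 + t *: r); first by rewrite inE.
by rewrite /base insv_along mulfK // addrK insvK.
Qed.

(* If g does not vanish at a but vanishes on the affine line r + F a, then the
   projection does not vanish on the line through a: all its other points
   are nonzero multiples of points of r + F a. *)
Lemma proj_nz k i (r a : 'rV[F]_k.+1) (g : 'rV[F]_k.+1 -> 'F_p) :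
  r 0 i != 0 -> homogeneous g -> g a != 0 -> (forall c, g (r + c *: a) = 0) ->
  proj i r g (dropv i (a - (a 0 i / r 0 i) *: r)) != 0.
Proof.
move=> nz_ri [gZ _] g_a g_line; set s := a 0 i / r 0 i.
rewrite /proj insv_dropv_base // (bigD1 s) //= subrK big1 ?addr0 // => t ne_ts.
have nz_ts : t - s != 0 by rewrite subr_eq0.
have -> : a - s *: r + t *: r = (t - s) *: (r + (t - s)^-1 *: a).
  by rewrite scalerDr scalerA mulfV // scale1r scalerBl [RHS]addrC addrA [LHS]addrAC.
by rewrite gZ.
Qed.

(* A function with small support vanishes on some affine line r + F a: if
   g (r + c a) != 0 then r lies in supp g - F a, a set of at most
   #|supp g| * q points. *)
Lemma exists_null_line k (g : 'rV[F]_k -> 'F_p) (a : 'rV[F]_k) :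
  (#|supp g| * #|F| < #|{: 'rV[F]_k}|)%N -> exists r, forall c, g (r + c *: a) = 0.
Proof.
move=> small_g.
pose B := [set sc.1 - sc.2 *: a | sc in setX (supp g) [set: F]].
have small_B : (#|B| < #|{: 'rV[F]_k}|)%N.
  by apply: leq_ltn_trans (leq_imset_card _ _) _; rewrite cardsX cardsT.
have [r r_B] : exists r, r \notin B.
  apply/existsP; apply: contraTT small_B; rewrite negb_exists -leqNgt -cardsT.
  by move=> /forallP inB; apply/subset_leq_card/subsetP => x _; apply/negPn.
exists r => c; apply/eqP; apply: contraNT r_B => g_rc; apply/imsetP.
by exists (r + c *: a, c); rewrite ?in_setX ?inE ?g_rc //= addrK.
Qed.

(* The difference of the indicators of two coordinate hyperplanes of F^k,
   k >= 3.  Each hyperplane u^perp meets x_j = 0 in a subspace of positive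
   dimension, so the indicator of x_j = 0 is balanced; the difference is
   moreover homogeneous (it vanishes at 0). *)
Definition two_planes k (j j' : 'I_k) (x : 'rV[F]_k) : 'F_p :=
  (x 0 j == 0)%:R - (x 0 j' == 0)%:R.

Lemma two_planes_homogeneous k (j j' : 'I_k) : homogeneous (two_planes j j').
Proof.
split => [a x nz_a|]; rewrite /two_planes !mxE; last by rewrite eqxx subrr.
by rewrite !mulf_eq0 (negbTE nz_a).
Qed.

Lemma two_planes_balanced k (j j' : 'I_k) : (2 < k)%N ->
  balanced (two_planes j j').
Proof.
move=> k_gt2 u _; rewrite sumrB.
have count_coord l : \sum_(x | dot x u == 0) ((x 0 l == 0)%:R : 'F_p) = 0.
  rewrite -[RHS](card_hyperplane_coord_Fp pcharF u l k_gt2) -sum1_card natr_sum.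
  rewrite big_mkcond [RHS]big_mkcond; apply: eq_bigr => x _; rewrite inE.
  by case: (dot x u == 0); case: (x 0 l == 0).
by rewrite !count_coord subrr.
Qed.

Lemma two_planes_nz k (j j' : 'I_k) : j != j' -> two_planes j j' (delta_mx 0 j') != 0.
Proof.
move=> ne_jj'; rewrite /two_planes !mxE (negbTE ne_jj') !eqxx /=.
by rewrite oner_eq0 subr0 oner_eq0.
Qed.

End BalancedFunctions.

Section Words.
Variables (F : finFieldType) (p : nat).
Hypothesis pcharF : p \in [pchar F].
Variable m : nat.

(* The projective point spanned by x (the set {0} when x = 0). *)
Definition pspan (x : 'rV[F]_m.+1) : {set 'rV[F]_m.+1} := [set a *: x | a : F].

Definition lift_word (v : word F m p) (x : 'rV[F]_m.+1) : 'F_p :=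
  \sum_(P : PGpoint F m | val P == pspan x) v P.

Lemma mem_pspan x : x \in pspan x.
Proof. by apply/imsetP; exists 1; rewrite ?scale1r. Qed.

Lemma pspanZ a x : a != 0 -> pspan (a *: x) = pspan x.
Proof.
move=> nz_a; apply/setP => y; apply/imsetP/imsetP => [[b _ ->]|[b _ ->]].
  by exists (b * a); rewrite ?scalerA.
by exists (b / a); rewrite // scalerA divfK.
Qed.

Lemma pspan0 : pspan 0 = [set 0].
Proof.
apply/setP => y; rewrite inE.
by apply/imsetP/eqP => [[b _ ->]|->]; [rewrite scaler0 | exists 0; rewrite ?scaler0].
Qed.

Lemma pspan_nz x : x != 0 -> pspan x != pspan 0.
Proof.
by move=> nz_x; apply: contraNneq nz_x => e; move: (mem_pspan x); rewrite e pspan0 inE.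
Qed.

Lemma pspan_rep (P : PGpoint F m) : exists2 x, x != 0 & val P = pspan x.
Proof. by case/existsP: (valP P) => x /andP [nz_x /eqP e]; exists x. Qed.

Lemma pspan_point x : x != 0 -> exists P : PGpoint F m, val P = pspan x.
Proof.
move=> nz_x; have pt_x : is_point (pspan x) by apply/existsP; exists x; rewrite nz_x eqxx.
by exists (Sub (pspan x) pt_x); rewrite SubK.
Qed.

Lemma pspan_eq x y : x != 0 -> pspan y = pspan x -> exists2 a, a != 0 & y = a *: x.
Proof.
move=> nz_x e; have /imsetP [a _ y_ax] : y \in pspan x by rewrite -e mem_pspan.
exists a => //; apply: contraNneq (pspan_nz nz_x) => a0.
by rewrite -e y_ax a0 scale0r.
Qed.

Lemma notin_pspan0 (P : PGpoint F m) : (val P == pspan 0) = false.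
Proof. by have [x nz_x ->] := pspan_rep P; exact: negbTE (pspan_nz nz_x). Qed.

Lemma card_representatives (P : PGpoint F m) :
  #|[set x | val P == pspan x]| = #|F|.-1.
Proof.
have [v nz_v eP] := pspan_rep P.
have -> : [set x | val P == pspan x] = pspan v :\ 0.
  apply/setP => x; rewrite !inE eP; apply/eqP/andP => [e|[nz_x /imsetP [a _ x_av]]].
    have [a nz_a ->] := pspan_eq nz_v (esym e).
    by rewrite scaler_eq0 negb_or nz_a nz_v; split => //; apply/imsetP; exists a.
  rewrite x_av pspanZ //; apply: contraNneq nz_x => a0.
  by rewrite x_av a0 scale0r.
have inj_v : injective (fun a : F => a *: v).
  move=> a b /eqP; rewrite -subr_eq0 -scalerBl scaler_eq0 (negbTE nz_v) orbF.
  by rewrite subr_eq0 => /eqP.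
have v0 : 0 \in pspan v by apply/imsetP; exists 0; rewrite ?scale0r.
by move: (cardsD1 0 (pspan v)); rewrite v0 card_imset // add1n => ->.
Qed.

Lemma sum_representatives (V : nmodType) (h : PGpoint F m -> V) :
  \sum_(x : 'rV[F]_m.+1) \sum_(P | val P == pspan x) h P = (\sum_P h P) *+ #|F|.-1.
Proof.
rewrite (exchange_big_dep xpredT) //= -sumrMnl; apply: eq_bigr => P _.
by rewrite sumr_const -(card_representatives P) cardsE.
Qed.

Lemma sum_points_Fp (h : PGpoint F m -> 'F_p) :
  \sum_P h P = - \sum_(x : 'rV[F]_m.+1) \sum_(P | val P == pspan x) h P.
Proof.
by rewrite sum_representatives -mulr_natr (card_finField_pred_Fp pcharF) mulrN1 opprK.
Qed.

Lemma lift_word_pt (v : word F m p) (P : PGpoint F m) x :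
  val P = pspan x -> lift_word v x = v P.
Proof. by move=> eP; rewrite /lift_word (big_pred1 P) // => Q; rewrite -eP val_eqE. Qed.

Lemma lift_word_homogeneous (v : word F m p) : homogeneous (lift_word v).
Proof.
split => [a x nz_a|]; first by rewrite /lift_word pspanZ.
by rewrite /lift_word big_pred0 // => P; rewrite notin_pspan0.
Qed.

Lemma word_of_homogeneous (g : 'rV[F]_m.+1 -> 'F_p) :
  homogeneous g -> exists v : word F m p, lift_word v =1 g.
Proof.
move=> [gZ g0]; exists [ffun P : PGpoint F m => g (xchoose (existsP (valP P)))] => x.
have [-> | nz_x] := eqVneq x 0; first by rewrite (lift_word_homogeneous _).2 g0.
have [P eP] := pspan_point nz_x; rewrite (lift_word_pt _ eP) ffunE.
case/andP: (xchooseP (existsP (valP P))); set w := xchoose _ => _ /eqP e.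
by have [a nz_a ->] := pspan_eq nz_x (etrans (esym e) eP); rewrite gZ.
Qed.

Lemma lift_word_nz (v : word F m p) x : lift_word v x != 0 -> v != 0.
Proof. by apply: contraNneq => ->; rewrite /lift_word big1 // => P _; rewrite ffunE. Qed.

(* The support of the lift consists of q - 1 representatives of each point of
   the support of the word. *)
Lemma card_supp_lift (v : word F m p) : #|supp (lift_word v)| = (wt v * #|F|.-1)%N.
Proof.
have -> : (wt v * #|F|.-1)%N = (\sum_P (v P != 0 : nat)) *+ #|F|.-1.
  rewrite -mulr_natr [_%:R]natrE /wt -sum1_card big_mkcond /=; congr (_ * _)%N.
  by apply: eq_bigr => P _; rewrite inE.
rewrite -sum_representatives /supp -sum1_card big_mkcond /=.
apply: eq_bigr => x _; rewrite inE.
have [-> | nz_x] := eqVneq x 0.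
  by rewrite (lift_word_homogeneous _).2 eqxx big_pred0 // => P; rewrite notin_pspan0.
have [P eP] := pspan_point nz_x.
rewrite (lift_word_pt _ eP) (big_pred1 P) ?inE // => Q; by rewrite -eP val_eqE.
Qed.

Lemma wt_gt0 (v : word F m p) : (0 < wt v)%N = (v != 0).
Proof.
rewrite /wt card_gt0; apply/set0Pn/idP => [[P]|nz_v]; rewrite ?inE.
  by apply: contraNneq => ->; rewrite ffunE.
have [P v_P] : exists P, v P != 0.
  apply/existsP; apply: contraNT nz_v; rewrite negb_exists => /forallP v0.
  by apply/eqP/ffunP => P; rewrite ffunE; apply/eqP/negPn.
by exists P; rewrite inE.
Qed.

Lemma dotw_incvec (v : word F m p) (H : PGhyperplane F m) (u : 'rV[F]_m.+1) :
  val H = [set x | x *m u^T == 0] ->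
  dotw v (incvec p H) = - \sum_(x | dot x u == 0) lift_word v x.
Proof.
move=> eH; rewrite /dotw sum_points_Fp; congr (- _); rewrite [RHS]big_mkcond /=.
apply: eq_bigr => x _; rewrite /lift_word.
have on_H P : val P = pspan x -> (val P \subset val H) = (dot x u == 0).
  move=> ->; rewrite eH; apply/subsetP/idP => [x_H|x_u y /imsetP [a _ ->]].
    by have := x_H x (mem_pspan x); rewrite inE dot_mx.
  by rewrite inE dot_mx dotZl (eqP x_u) mulr0.
case: ifP => x_u.
  by apply: eq_bigr => P /eqP/on_H; rewrite /incvec ffunE x_u => ->; rewrite mulr1.
by apply: big1 => P /eqP/on_H; rewrite /incvec ffunE x_u => ->; rewrite mulr0.
Qed.

Lemma dual_balanced (v : word F m p) : (v \in PGdual F m p) <-> balanced (lift_word v).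
Proof.
split => [|bal_v]; rewrite inE.
  move=> /forall_inP v_dual u nz_u.
  have hyp_u : is_hyperplane [set x : 'rV[F]_m.+1 | x *m u^T == 0].
    by apply/existsP; exists u; rewrite nz_u eqxx.
  pose H : PGhyperplane F m := Sub _ hyp_u.
  have H_code : incvec p H \in PGcode F m p.
    rewrite inE; apply/existsP; exists [ffun H' => (H' == H)%:R].
    apply/eqP/ffunP => P; rewrite !ffunE (bigD1 H) //= !ffunE eqxx mul1r big1 ?addr0 //.
    by move=> H' ne_H'H; rewrite ffunE (negbTE ne_H'H) mul0r.
  by apply/eqP; rewrite -oppr_eq0 -(dotw_incvec _ (SubK _ hyp_u)) v_dual.
apply/forall_inP => c; rewrite inE => /existsP [a /eqP ->].
rewrite /dotw.
under eq_bigr => P _ do rewrite ffunE mulr_sumr.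
rewrite exchange_big /=; apply/eqP/big1 => H _.
have [u /andP [nz_u /eqP eH]] := existsP (valP H).
transitivity (a H * dotw v (incvec p H)).
  by rewrite /dotw mulr_sumr; apply: eq_bigr => P _; rewrite mulrCA.
by rewrite (dotw_incvec _ eH) bal_v // oppr0 mulr0.
Qed.

End Words.

Section MinimumDistance.
Variables (F : finFieldType) (p : nat).
Hypothesis pcharF : p \in [pchar F].

Definition has_nz_word m (S : {set word F m p}) := exists c, (c \in S) && (c != 0).

(* minn has no neutral element in nat, so the bigop lemmas for monoids do not
   apply to mindist. *)
Lemma bigmin_le (I : finType) (P : pred I) (G : I -> nat) x0 j :
  P j -> (\big[minn/x0]_(i | P i) G i <= G j)%N.
Proof.
move=> P_j; elim: (index_enum I) (mem_index_enum j) => // a s IH.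
rewrite in_cons big_cons => /predU1P [<- | j_s]; first by rewrite P_j geq_minl.
by case: (P a); [apply: leq_trans (geq_minr _ _) _ |]; apply: IH.
Qed.

Lemma mindist_le m (S : {set word F m p}) c : c \in S -> c != 0 -> (mindist S <= wt c)%N.
Proof. by move=> c_S nz_c; apply: bigmin_le; rewrite c_S nz_c. Qed.

Lemma mindist_attained m (S : {set word F m p}) :
  has_nz_word S -> exists c, [/\ c \in S, c != 0 & mindist S = wt c].
Proof.
move=> [c0 S_c0]; pose P c := (c \in S) && (c != 0).
case: (@arg_minnP _ c0 P (@wt F m p) S_c0) => c /andP [c_S nz_c] c_min.
exists c; split => //; apply/eqP; rewrite eqn_leq mindist_le //=.
apply: (big_ind (fun n => wt c <= n)%N) => [|n n' ? ?|d /c_min //].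
  by apply: leqW; rewrite /wt max_card.
by rewrite leq_min; apply/andP.
Qed.

Lemma card_finField_pred_gt0 : (0 < #|F|.-1)%N.
Proof. by rewrite -subn1 subn_gt0 finNzRing_gt1. Qed.

Lemma word_of_balanced m (g : 'rV[F]_m.+1 -> 'F_p) :
  homogeneous g -> balanced g -> (0 < #|supp g|)%N ->
  exists2 c : word F m p,
    (c \in PGdual F m p) && (c != 0) & (wt c * #|F|.-1)%N = #|supp g|.
Proof.
move=> hom_g bal_g /card_gt0P [x]; rewrite inE => g_x.
have [c lift_c] := word_of_homogeneous hom_g.
exists c; last by rewrite -card_supp_lift; apply: eq_card => y; rewrite !inE lift_c.
rewrite (lift_word_nz (x := x)) ?lift_c // andbT.
apply/(dual_balanced pcharF) => u nz_u.
by rewrite (eq_bigr _ (fun y _ => lift_c y)) bal_g.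
Qed.

Lemma embed_word m (c : word F m p) : (0 < m)%N -> c \in PGdual F m p -> c != 0 ->
  exists2 c' : word F m.+1 p, (c' \in PGdual F m.+1 p) && (c' != 0) & wt c' = wt c.
Proof.
move=> m_gt0 c_dual nz_c.
have hom_g := ext_homogeneous ord_max (lift_word_homogeneous c).
have bal_g := ext_balanced pcharF ord_max (m_gt0 : (1 < m.+1)%N)
  (lift_word_homogeneous c) ((dual_balanced pcharF c).1 c_dual).
have supp_g : #|supp (ext ord_max (lift_word c))| = (wt c * #|F|.-1)%N.
  by rewrite card_supp_ext card_supp_lift.
have [|c' c'_dual wt_c'] := word_of_balanced hom_g bal_g.
  by rewrite supp_g muln_gt0 wt_gt0 nz_c card_finField_pred_gt0.
by exists c' => //; apply/eqP; rewrite -(eqn_pmul2r card_finField_pred_gt0) wt_c' supp_g.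
Qed.

Lemma project_word m (c : word F m.+1 p) : c \in PGdual F m.+1 p -> c != 0 ->
  (wt c * #|F|.-1 < #|{: 'rV[F]_m.+1}|)%N ->
  exists2 c' : word F m p, (c' \in PGdual F m p) && (c' != 0) & (wt c' <= wt c)%N.
Proof.
move=> c_dual nz_c small_c; set g := lift_word c.
have hom_g : homogeneous g := lift_word_homogeneous c.
have [a] : exists a, a \in supp g.
  by apply/card_gt0P; rewrite card_supp_lift muln_gt0 wt_gt0 nz_c card_finField_pred_gt0.
rewrite inE => g_a.
have [r null_r] : exists r, forall t, g (r + t *: a) = 0.
  apply: exists_null_line; rewrite card_supp_lift.
  have -> : #|{: 'rV[F]_m.+2}| = (#|{: 'rV[F]_m.+1}| * #|F|)%N.
    by rewrite !card_mx !mul1n expnSr.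
  by rewrite ltn_pmul2r // ltnW // finNzRing_gt1.
have g_r : g r = 0 by rewrite -[r]addr0 -(scale0r a) null_r.
have [i nz_ri] : exists i, r 0 i != 0.
  apply: nz_coord; apply: contraNneq g_a => r0.
  by rewrite -(scale1r a) -[_ *: a]add0r -r0 null_r.
have [|c' c'_dual wt_c'] := word_of_balanced (proj_homogeneous i hom_g g_r)
  (proj_balanced nz_ri ((dual_balanced pcharF c).1 c_dual)).
  by apply/card_gt0P; exists (dropv i (a - (a 0 i / r 0 i) *: r)); rewrite inE proj_nz.
exists c' => //; rewrite -(leq_pmul2r card_finField_pred_gt0) wt_c' -card_supp_lift.
exact: card_supp_proj.
Qed.

Lemma mindist_step m : (0 < m)%N -> has_nz_word (PGdual F m p) ->
  mindist (PGdual F m.+1 p) = mindist (PGdual F m p) /\ has_nz_word (PGdual F m.+1 p).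
Proof.
move=> m_gt0 dual_nz.
have [c [c_dual nz_c d_c]] := mindist_attained dual_nz.
have [c1 c1_dual wt_c1] := embed_word m_gt0 c_dual nz_c.
have [e [e_dual nz_e d_e]] := mindist_attained (ex_intro _ c1 c1_dual).
have le_d : (mindist (PGdual F m.+1 p) <= mindist (PGdual F m p))%N.
  by case/andP: c1_dual => ? ?; rewrite d_c -wt_c1 mindist_le.
have small_e : (wt e * #|F|.-1 < #|{: 'rV[F]_m.+1}|)%N.
  apply: (@leq_ltn_trans (wt c * #|F|.-1)).
    by rewrite leq_pmul2r ?card_finField_pred_gt0 // -d_e -d_c.
  rewrite -card_supp_lift -cardsT (cardsD1 0 setT) inE add1n ltnS subset_leq_card //.
  apply/subsetP => x; rewrite !inE andbT; apply: contraNneq => ->.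
  by rewrite (lift_word_homogeneous c).2.
have [e' e'_dual wt_e'] := project_word e_dual nz_e small_e.
split; last by exists c1.
apply/eqP; rewrite eqn_leq le_d d_e; case/andP: e'_dual => ? ?.
exact: leq_trans (mindist_le _ _) wt_e'.
Qed.

Lemma plane_dual_nz : has_nz_word (PGdual F 2 p).
Proof.
have [|c c_dual _] := word_of_balanced (two_planes_homogeneous F p ord0 ord_max)
  (two_planes_balanced pcharF ord0 ord_max (isT : (2 < 3)%N)).
  by apply/card_gt0P; exists (delta_mx 0 ord_max); rewrite inE two_planes_nz.
by exists c.
Qed.

End MinimumDistance.

Theorem mainTheorem14 (F : finFieldType) (p n : nat) :
  p \in [pchar F]%R -> (3 <= n)%N ->
  mindist (PGdual F n p) = mindist (PGdual F 2 p).
Proof.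
move=> pcharF n_ge3.
have step k : mindist (PGdual F k.+2 p) = mindist (PGdual F 2 p) /\
    has_nz_word (PGdual F k.+2 p).
  elim: k => [|k [IHd IHnz]]; first by split; last exact: plane_dual_nz.
  have [d_step nz_step] := mindist_step pcharF (isT : (0 < k.+2)%N) IHnz.
  by rewrite d_step IHd; split.
by rewrite -(subnK (ltnW n_ge3)) addn2; exact: (step _).1.
Qed.
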